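(* Let $k\ge1$ be an integer and $a>0$ a constant (playing the role of $F^{(k)}(0)$). For $c\in\mathbb R$ define \[ \psi(c)=\frac{\int_0^\infty x\exp\{cx-\frac{a}{(k+1)!}x^{k+1}\}dx}{\int_0^\infty \exp\{cx-\frac{a}{(k+1)!}x^{k+1}\}dx},\qquad b(c)=\sqrt{2\left|-c\,\psi(c)+\frac{a}{k!}\psi(c)^{k+1}\right|}. \] Then $\lim_{c\to-\infty}b(c)=\sqrt2$. *)

From HB Require Import structures.
From mathcomp Require Import all_boot all_order all_algebra.
From mathcomp Require Import all_classical all_reals all_analysis.
Set Implicit Arguments. Unset Strict Implicit. Unset Printing Implicit Defensive.
Import Order.TTheory GRing.Theory Num.Theory.
Import numFieldNormedType.Exports.
Local Open Scope classical_set_scope.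
Local Open Scope ring_scope.

Definition wgt {R : realType} (k : nat) (a c x : R) : R :=
  expR (c * x - a / (k.+1)`!%:R * x ^+ k.+1).

Definition psi {R : realType} (k : nat) (a c : R) : R :=
  Rintegral (@lebesgue_measure R) `[0, +oo[%classic (fun x => x * wgt k a c x)
  / Rintegral (@lebesgue_measure R) `[0, +oo[%classic (fun x => wgt k a c x).

Definition bfun {R : realType} (k : nat) (a c : R) : R :=
  Num.sqrt (2 * `| - c * psi k a c + a / k`!%:R * psi k a c ^+ k.+1 |).

From HB Require Import structures.
From mathcomp Require Import all_boot all_order all_algebra.
From mathcomp Require Import all_classical all_reals all_analysis.
From mathcomp Require Import measurable_realfun ring.
Import Order.TTheory GRing.Theory Num.Theory.
Import numFieldNormedType.Exports.
Local Open Scope classical_set_scope.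
Local Open Scope ring_scope.

(* For c < 0 the weight is w(x) = e^{cx} e^{-α x^(k+1)} with α = a/(k+1)!, and
   1 - t <= e^{-t} <= 1 for t >= 0 squeezes each moment ∫ x^n w between the
   exponential moment M_n = n!/(-c)^(n+1) and M_n - α ∫ x^(n+k+1) e^{cx}, an error
   of relative size O((-c)^-(k+1)).  Hence -c ∫ w → 1 and c^2 ∫ x w → 1 as
   c → -oo, so -c ψ(c) → 1 and ψ(c) → 0, and 2 |-c ψ + a/k! ψ^(k+1)| → 2. *)

Lemma Rintegral_sandwich {d} {T : measurableType d} {R : realType}
    (mu : {measure set T -> \bar R}) (D : set T) (g e h : T -> R) (E H : R) :
  measurable D -> measurable_fun D g -> measurable_fun D e -> measurable_fun D h ->
  (forall x, D x -> 0 <= g x) -> (forall x, D x -> 0 <= h x) ->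
  (forall x, D x -> g x <= e x <= g x + h x) ->
  (\int[mu]_(x in D) (e x)%:E = E%:E)%E -> (\int[mu]_(x in D) (h x)%:E <= H%:E)%E ->
  E - H <= \int[mu]_(x in D) g x <= E.
Proof.
move=> mD mg me mh g0 h0 geh eE hH.
have mge : measurable_fun D (EFin \o g) by exact/measurable_EFinP.
have mhe : measurable_fun D (EFin \o h) by exact/measurable_EFinP.
have g0e x : D x -> (0 <= (g x)%:E)%E by move/g0; rewrite lee_fin.
have h0e x : D x -> (0 <= (h x)%:E)%E by move/h0; rewrite lee_fin.
have gE : (\int[mu]_(x in D) (g x)%:E <= E%:E)%E.
  rewrite -eE; apply: ge0_le_integral => //; first exact/measurable_EFinP.
  by move=> x Dx; rewrite lee_fin; case/andP: (geh x Dx).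
have Eg : (E%:E <= \int[mu]_(x in D) (g x)%:E + \int[mu]_(x in D) (h x)%:E)%E.
  rewrite -eE -ge0_integralD //; apply: ge0_le_integral => //.
  - by move=> x Dx; rewrite lee_fin (le_trans (g0 x Dx)) //; case/andP: (geh x Dx).
  - exact/measurable_EFinP.
  - exact: emeasurable_funD.
  - by move=> x Dx; rewrite -EFinD lee_fin; case/andP: (geh x Dx).
have gfin : (\int[mu]_(x in D) (g x)%:E)%E \is a fin_num.
  by rewrite ge0_fin_numE ?integral_ge0 // (le_lt_trans gE) ?ltry.
rewrite /Rintegral; apply/andP; split; last by rewrite -lee_fin fineK.
rewrite lerBlDr -lee_fin EFinD fineK //.
by apply: (le_trans Eg); rewrite leeD2l.
Qed.

Section exponential_moments.
Context {R : realType}.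
Notation mu := (@lebesgue_measure R).

Lemma expRM_cvgy0 (c : R) : c < 0 -> expR (c * x) @[x --> +oo] --> 0.
Proof.
move=> c0; have -> : (fun x => expR (c * x)) = (fun z => expR (- z)) \o ( *%R (- c)).
  by apply: funext => x /=; rewrite mulNr opprK.
apply: (@cvg_comp _ _ _ _ _ _ (pinfty_nbhs R)); last exact: cvgr_expR.
by apply: gt0_cvgMry cvg_id; rewrite oppr_gt0.
Qed.

Lemma exprn_expRM_le (n : nat) (c x : R) : c < 0 -> 0 <= x ->
  x ^+ n * expR (c * x) <= n`!%:R * (2 / - c) ^+ n * expR (c / 2 * x).
Proof.
(* [y ^+ n <= n`!%:R * expR y] at [y = - c x / 2] *)
move=> c0 x0; set y := - (c / 2 * x).
have y0 : 0 <= y by rewrite /y -mulNr mulr_ge0 // -mulNr divr_ge0 ?oppr_ge0 ?ltW.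
have xE : x = 2 / - c * y by rewrite /y; field; rewrite lt_eqF.
have yn : y ^+ n <= n`!%:R * expR y.
  case: n => [|n]; first by rewrite expr0 fact0 mul1r -expR0 ler_expR.
  rewrite mulrC -ler_pdivrMr ?ltr0n ?fact_gt0 //.
  by apply: le_trans (expR_ge1Dxn n y0); rewrite lerDr.
have -> : expR (c * x) = expR (- y) * expR (c / 2 * x).
  by rewrite -expRD /y opprK -mulrDl -splitr.
rewrite {1}xE; have -> : (2 / - c * y) ^+ n * (expR (- y) * expR (c / 2 * x)) =
    (2 / - c) ^+ n * (y ^+ n * expR (- y)) * expR (c / 2 * x) by rewrite exprMn; ring.
rewrite [n`!%:R * _]mulrC ler_pM2r ?expR_gt0 // ler_pM2l ?exprn_gt0 ?divr_gt0 ?oppr_gt0 //.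
by rewrite expRN ler_pdivrMr ?expR_gt0.
Qed.

Lemma mulr_expRM_cvgy0 (c : R) : c < 0 -> x * expR (c * x) @[x --> +oo] --> 0.
Proof.
move=> c0; apply: (@squeeze_cvgr _ _ _ _ (cst 0) (fun x => 2 / - c * expR (c / 2 * x))).
- near=> x; have x0 : 0 <= x by near: x; apply: nbhs_pinfty_ge.
  rewrite mulr_ge0 ?expR_ge0 //=.
  by have := @exprn_expRM_le 1 _ _ c0 x0; rewrite mul1r !expr1.
- exact: cvg_cst.
- by rewrite -(mulr0 (2 / - c)); apply: cvgMr; apply: expRM_cvgy0; rewrite pmulr_llt0.
Unshelve. all: end_near. Qed.

Lemma continuous_expRM (c : R) : continuous (fun x : R => expR (c * x)).
Proof.
move=> x; apply: continuous_comp; last exact: continuous_expR.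
by apply: (@continuousM _ R^o (fun=> c) id); [exact: cst_continuous | exact: cvg_id].
Qed.

Lemma measurable_expRM (c : R) (D : set R) :
  measurable_fun D (fun x : R => expR (c * x)).
Proof. by apply: measurableT_comp => //; exact: measurable_funM. Qed.

Lemma measurable_exprn_expRM (n : nat) (c : R) (D : set R) :
  measurable_fun D (fun x : R => x ^+ n * expR (c * x)).
Proof.
by apply/measurable_funM; [exact: exprn_measurable | exact: measurable_expRM].
Qed.

Lemma integral_itv0y_is_derive (f F : R -> R) :
  (forall x : R, is_derive x (1 : R) F (f x)) -> continuous f ->
  (forall x, 0 <= x -> 0 <= f x) -> F x @[x --> +oo] --> 0 ->
  (\int[mu]_(x in `[0%R, +oo[) (f x)%:E = (- F 0)%:E)%E.
Proof.
move=> dF cf f0 F0.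
have cF : continuous F.
  move=> x; apply/differentiable_continuous/derivable1_diffP.
  exact: (@ex_derive _ _ _ _ _ _ _ (dF x)).
rewrite (ge0_continuous_FTC2y (F := F) (a := 0) (l := 0)) // ?sub0e //.
- exact: continuous_subspaceT.
- exact/cvg_at_right_filter/cF.
- by move=> x _; rewrite derive1E derive_val.
Qed.

Lemma integral_expRM (c : R) : c < 0 ->
  (\int[mu]_(x in `[0%R, +oo[) (expR (c * x))%:E = (- c^-1)%:E)%E.
Proof.
move=> c0; have c_neq0 : c != 0 by rewrite lt_eqF.
have dF (x : R) : is_derive x (1 : R) (fun y => expR (c * y) / c) (expR (c * x)).
  by apply: is_derive_eq; rewrite /GRing.scale /=; field.
rewrite (integral_itv0y_is_derive _ _ dF) ?mulr0 ?expR0 ?mul1r //.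
- exact: continuous_expRM.
- by rewrite -(mul0r c^-1); apply: cvgMl; exact: expRM_cvgy0.
Qed.

Lemma integral_mulr_expRM (c : R) : c < 0 ->
  (\int[mu]_(x in `[0%R, +oo[) (x * expR (c * x))%:E = (c^-2)%:E)%E.
Proof.
move=> c0; have c_neq0 : c != 0 by rewrite lt_eqF.
pose F y := c^-1 * (y * expR (c * y)) - c^-2 * expR (c * y).
have dF (x : R) : is_derive x (1 : R) F (x * expR (c * x)).
  by apply: is_derive_eq; rewrite /GRing.scale /=; field.
rewrite (integral_itv0y_is_derive _ _ dF) /F ?mul0r ?mulr0 ?expR0 ?mulr1 ?sub0r ?opprK //.
- by move=> x; apply: (@continuousM _ R^o id); [exact: cvg_id | exact: continuous_expRM].
- by move=> x x0; rewrite mulr_ge0 ?expR_ge0.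
- rewrite [X in _ --> X](_ : _ = c^-1 * 0 - c^-2 * 0); last by rewrite !mulr0 subr0.
  by apply: cvgB; apply: cvgMr; [exact: mulr_expRM_cvgy0 | exact: expRM_cvgy0].
Qed.

Lemma integral_exprn_expRM_le (n : nat) (c : R) : c < 0 ->
  (\int[mu]_(x in `[0%R, +oo[) (x ^+ n * expR (c * x))%:E <=
    (n`!%:R * (2 / - c) ^+ n.+1)%:E)%E.
Proof.
move=> c0; have c2_lt0 : c / 2 < 0 by rewrite pmulr_llt0.
have C0 : 0 <= n`!%:R * (2 / - c) ^+ n :> R.
  by rewrite mulr_ge0 ?exprn_ge0 ?divr_ge0 ?oppr_ge0 ?ltW.
apply: le_trans (_ : \int[mu]_(x in `[0%R, +oo[)
    ((n`!%:R * (2 / - c) ^+ n)%:E * (expR (c / 2 * x))%:E) <= _)%E.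
  apply: ge0_le_integral => //.
  - by move=> x /= /[!in_itv] /andP[x0 _]; rewrite lee_fin mulr_ge0 ?expR_ge0 ?exprn_ge0.
  - by apply/measurable_EFinP; exact: measurable_exprn_expRM.
  - by apply: emeasurable_funM => //; apply/measurable_EFinP; exact: measurable_expRM.
  - by move=> x /= /[!in_itv] /andP[x0 _]; rewrite -EFinM lee_fin exprn_expRM_le.
rewrite ge0_integralZl_EFin //; last by apply/measurable_EFinP; exact: measurable_expRM.
by rewrite integral_expRM // -EFinM lee_fin exprSr -mulrA invf_div -mulrN -invrN.
Qed.

Lemma divN_exprS_cvgNy0 (b : R) (n : nat) : (b / - c) ^+ n.+1 @[c --> -oo] --> 0.
Proof.
have inv_cvg0 : c^-1 @[c --> -oo] --> (0 : R).
  apply/(@ltr0_cvgV0 _ _ _ _ id); last exact: cvg_id.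
  by near=> c; near: c; apply: nbhs_ninfty_lt.
have : b / - c @[c --> -oo] --> 0.
  rewrite -(mulr0 (- b)); under eq_fun do rewrite invrN mulrN -mulNr.
  exact: cvgMr inv_cvg0.
by move=> h; have := cvg_comp _ _ h (@exprn_continuous R n.+1 0); rewrite expr0n.
Unshelve. all: end_near. Qed.

End exponential_moments.

Section weight_moments.
Context {R : realType}.
Notation mu := (@lebesgue_measure R).
Variables (k : nat) (a : R).

Lemma wgtE (c x : R) :
  wgt k a c x = expR (c * x) * expR (- (a / (k.+1)`!%:R * x ^+ k.+1)).
Proof. by rewrite /wgt -expRD. Qed.

Lemma expRM_le_wgt (c x : R) :
  expR (c * x) <= wgt k a c x + a / (k.+1)`!%:R * x ^+ k.+1 * expR (c * x).
Proof.
rewrite wgtE -lerBlDr; set t := a / _ * _.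
have := ler_wpM2l (expR_ge0 (c * x)) (expR_ge1Dx (- t)).
by apply: le_trans; rewrite le_eqVlt; apply/predU1P; left; ring.
Qed.

Hypothesis a_ge0 : 0 <= a.

Lemma wgt_le_expRM (c x : R) : 0 <= x -> wgt k a c x <= expR (c * x).
Proof.
move=> x0; rewrite wgtE ler_piMr ?expR_ge0 // expR_le1 oppr_le0.
by rewrite mulr_ge0 ?exprn_ge0 ?divr_ge0.
Qed.

Lemma measurable_wgt (c : R) (D : set R) : measurable_fun D (wgt k a c).
Proof.
apply: measurableT_comp => //; apply: measurable_funB; first exact: measurable_funM.
by apply: measurable_funM => //; exact: exprn_measurable.
Qed.

Lemma Rintegral_exprn_wgt_bounds (n : nat) (c E : R) : c < 0 ->
  (\int[mu]_(x in `[0%R, +oo[) (x ^+ n * expR (c * x))%:E = E%:E)%E ->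
  E - a / (k.+1)`!%:R * ((n + k.+1)`!%:R * (2 / - c) ^+ (n + k.+1).+1) <=
  \int[mu]_(x in `[0%R, +oo[) (x ^+ n * wgt k a c x) <= E.
Proof.
move=> c0 ME.
set al := a / (k.+1)`!%:R; have al0 : 0 <= al by rewrite divr_ge0.
apply: (Rintegral_sandwich mu _ _ (fun x => x ^+ n * expR (c * x))
  (fun x => al * (x ^+ (n + k.+1) * expR (c * x)))) => //.
- by apply: measurable_funM; [exact: exprn_measurable | exact: measurable_wgt].
- exact: measurable_exprn_expRM.
- by apply: measurable_funM => //; exact: measurable_exprn_expRM.
- by move=> x /= /[!in_itv] /andP[x0 _]; rewrite mulr_ge0 ?exprn_ge0 ?expR_ge0.
- by move=> x /= /[!in_itv] /andP[x0 _]; rewrite !mulr_ge0 ?exprn_ge0 ?expR_ge0.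
- move=> x /= /[!in_itv] /andP[x0 _]; rewrite ler_wpM2l ?exprn_ge0 ?wgt_le_expRM //=.
  have -> : al * (x ^+ (n + k.+1) * expR (c * x)) =
    x ^+ n * (al * x ^+ k.+1 * expR (c * x)) by rewrite exprD; ring.
  by rewrite -mulrDr ler_wpM2l ?exprn_ge0 ?expRM_le_wgt.
- clearbody al; under eq_integral do rewrite EFinM.
  rewrite ge0_integralZl_EFin //.
  + by rewrite EFinM; apply: lee_wpmul2l; rewrite ?lee_fin ?integral_exprn_expRM_le.
  + by move=> x /= /[!in_itv] /andP[x0 _]; rewrite lee_fin mulr_ge0 ?exprn_ge0 ?expR_ge0.
  + by apply/measurable_EFinP; exact: measurable_exprn_expRM.
Qed.

Lemma scaled_moment_wgt_cvgNy (n : nat) :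
  (forall c : R, c < 0 -> (\int[mu]_(x in `[0%R, +oo[) (x ^+ n * expR (c * x))%:E =
    (n`!%:R / (- c) ^+ n.+1)%:E)%E) ->
  (- c) ^+ n.+1 / n`!%:R * \int[mu]_(x in `[0%R, +oo[) (x ^+ n * wgt k a c x)
    @[c --> -oo] --> (1 : R).
Proof.
move=> moment; set C := a / (k.+1)`!%:R * (n + k.+1)`!%:R / n`!%:R * 2 ^+ n.+1.
apply: (@squeeze_cvgr _ _ _ _ (fun c => 1 - C * (2 / - c) ^+ k.+1) (cst 1)).
- near=> c; have c0 : c < 0 by near: c; apply: nbhs_ninfty_lt.
  have s0 : 0 < (- c) ^+ n.+1 / n`!%:R.
    by rewrite divr_gt0 ?exprn_gt0 ?oppr_gt0 ?ltr0n ?fact_gt0.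
  have /andP[lo hi] := Rintegral_exprn_wgt_bounds _ _ _ c0 (moment c c0).
  rewrite -(ler_pM2l s0) in lo; rewrite -(ler_pM2l s0) in hi.
  apply/andP; split; [apply: le_trans lo | apply: le_trans hi _]; last first.
    by rewrite /cst mulrC -invf_div mulVf // gt_eqF.
  have c_neq0 : c != 0 by rewrite lt_eqF.
  have pow2E : (- c) ^+ n.+1 * (2 / - c) ^+ n.+1 = 2 ^+ n.+1.
    by rewrite -exprMn mulrC divfK // oppr_eq0.
  have u_neq0 : (- c) ^+ n.+1 != 0 by rewrite expf_neq0 // oppr_eq0.
  have fact_neq0 m : m`!%:R != 0 :> R by rewrite pnatr_eq0 -lt0n fact_gt0.
  rewrite /C -pow2E -addSn exprD.
  move: ((- c) ^+ n.+1) u_neq0 ((2 / - c) ^+ n.+1) ((2 / - c) ^+ k.+1) => u u0 t1 t2.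
  by rewrite le_eqVlt; apply/predU1P; left; field; rewrite u0 !fact_neq0.
- rewrite -[X in _ --> X]subr0 -(mulr0 C).
  by apply: cvgB; [exact: cvg_cst | apply: cvgMr; exact: divN_exprS_cvgNy0].
- exact: cvg_cst.
Unshelve. all: end_near. Qed.

Lemma mulN_psi_cvgNy : - c * psi k a c @[c --> -oo] --> (1 : R).
Proof.
have moment0 (c : R) : c < 0 -> (\int[mu]_(x in `[0%R, +oo[) (x ^+ 0 * expR (c * x))%:E =
    (0`!%:R / (- c) ^+ 1)%:E)%E.
  move=> c0; under eq_integral do rewrite expr0 mul1r.
  by rewrite integral_expRM // div1r invrN.
have moment1 (c : R) : c < 0 -> (\int[mu]_(x in `[0%R, +oo[) (x ^+ 1 * expR (c * x))%:E =
    (1`!%:R / (- c) ^+ 2)%:E)%E.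
  by move=> c0; rewrite integral_mulr_expRM // div1r sqrrN.
have FF : Filter (ninfty_nbhs R) by exact: _.
have := cvgM (FF := FF) (scaled_moment_wgt_cvgNy 1 moment1)
  (cvgV (FF := FF) (oner_neq0 R) (scaled_moment_wgt_cvgNy 0 moment0)).
rewrite invr1 mulr1 => lim; apply: cvg_trans lim; apply: near_eq_cvg; near=> c.
have c_neq0 : c != 0 by rewrite lt_eqF //; near: c; apply: nbhs_ninfty_lt.
rewrite /psi; have -> : \int[mu]_(x in `[0%R, +oo[) wgt k a c x =
    \int[mu]_(x in `[0%R, +oo[) (x ^+ 0 * wgt k a c x).
  by apply: eq_Rintegral => x _; rewrite expr0 mul1r.
(* with the inverse of the denominator as an atom, the identity needs no [\int wgt != 0] *)
by rewrite /= !invfM; move: (\int[mu]_(x in _) _)^-1 => iD; field.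
Unshelve. all: end_near. Qed.

Lemma psi_cvgNy0 : psi k a c @[c --> -oo] --> (0 : R).
Proof.
have FF : Filter (ninfty_nbhs R) by exact: _.
have := cvgM (FF := FF) mulN_psi_cvgNy (divN_exprS_cvgNy0 1 0); rewrite mulr0 => lim.
apply: cvg_trans lim; apply: near_eq_cvg; near=> c.
have c_neq0 : c != 0 by rewrite lt_eqF //; near: c; apply: nbhs_ninfty_lt.
by rewrite /=; field.
Unshelve. all: end_near. Qed.

End weight_moments.

Theorem lemma4 (R : realType) (k : nat) (a : R) (hk : (1 <= k)%N) (ha : 0 < a) :
  bfun k a c @[c --> -oo] --> Num.sqrt 2.
Proof.
have a_ge0 := ltW ha.
have : 2 * `| - c * psi k a c + a / k`!%:R * psi k a c ^+ k.+1 | @[c --> -oo] -->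
    (2 * `| 1 + a / k`!%:R * 0 ^+ k.+1 | : R).
  apply: cvgMr; apply: cvg_norm; apply: cvgD; first exact: mulN_psi_cvgNy.
  by apply: cvgMr; have := cvg_comp _ _ (psi_cvgNy0 k a a_ge0) (@exprn_continuous R k.+1 0).
rewrite expr0n mulr0 addr0 normr1 mulr1 => h.
by apply: (cvg_comp _ _ h); exact: sqrt_continuous.
Qed.
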